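(* Let a program execution be a finite sequence of heaps $h_0,h_1,\dots,h_n$, where $h_0$ is the initial heap in which the only allocated object is the special object $\mathit{Void}$, which is open ($\mathit{Void}.\mathit{closed}=\mathit{False}$), and each $h_{i+1}$ is obtained from $h_i$ by one elementary step: either allocating a fresh object (with some initial attribute values), or updating a single attribute $x.a$ of an allocated object $x$ to a new value. Consider a verification methodology $M$ whose proof obligations guarantee, for every step of every execution of a program that satisfies them: (a) every freshly allocated object is open (its $\mathit{closed}$ attribute is $\mathit{False}$); (b) whenever $x.\mathit{owner}$ is updated or $x.\mathit{closed}$ is set to $\mathit{False}$, the object $x$ is free in the state before the step (i.e. $x.\mathit{owner}.\mathit{closed}=\mathit{False}$); (c) whenever $x.\mathit{closed}$ is updated to $\mathit{True}$, every object $o\in x.\mathit{owns}$ satisfies $o.\mathit{closed}=\mathit{True}$ and $o.\mathit{owner}=x$ in the state before the step; (d) whenever an attribute $x.a$ with $a\notin\{\mathit{closed},\mathit{owner}\}$ is updated, $x$ is open in the state before the step. Then every program that satisfies $M$'s proof obligations satisfies, in every heap of every execution, the property $$\forall o,p:\ p.\mathit{closed}\wedge o\in p.\mathit{owns}\ \Rightarrow\ o.\mathit{closed}\wedge o.\mathit{owner}=p \qquad \text{(G2)}$$ (quantifying over allocated objects).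
   Context: Every object has built-in (ghost) attributes: $\mathit{closed}$ (Boolean, encoding consistency), $\mathit{owner}$ (an object) and $\mathit{owns}$ (a set of objects). An object $o$ is open if $o.\mathit{closed}=\mathit{False}$, and free if $o.\mathit{owner}$ is open. Deallocation is not modeled, so allocated objects only reference allocated objects. *)

(* O : type of object references, Void : O the special object,
   A : names of the remaining (non-built-in) attributes, V : their values. *)

Set Implicit Arguments.

Record heap (O A V : Type) := Heap {
  alloc  : O -> Prop;
  closed : O -> bool;
  owner  : O -> O;
  owns   : O -> O -> Prop;   (* owns x o  <->  o \in x.owns *)
  fld    : A -> O -> V
}.

Section Model.
Variables (O A V : Type) (Void : O).

Inductive action :=
| Alloc    (x : O)                 (* allocate fresh x with some initial values *)
| SetClosed (x : O) (b : bool)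
| SetOwner (x : O) (q : O)
| SetOwns  (x : O) (Sx : O -> Prop)
| SetFld   (x : O) (a : A) (v : V) .

(* h' is obtained from h by performing action act.  Allocated objects only
   reference allocated objects, so new owner / owns values must be allocated. *)
Definition step (h : heap O A V) (act : action) (h' : heap O A V) : Prop :=
  match act with
  | Alloc x =>
      ~ alloc h x /\
      (forall y, alloc h' y <-> (alloc h y \/ y = x)) /\
      (forall y, y <> x ->
         closed h' y = closed h y /\ owner h' y = owner h y /\
         owns h' y = owns h y /\ (forall a, fld h' a y = fld h a y)) /\
      alloc h' (owner h' x) /\
      (forall o, owns h' x o -> alloc h' o)
  | SetClosed x b =>
      alloc h x /\ alloc h' = alloc h /\
      closed h' x = b /\ (forall y, y <> x -> closed h' y = closed h y) /\
      owner h' = owner h /\ owns h' = owns h /\ fld h' = fld h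
  | SetOwner x q =>
      alloc h x /\ alloc h q /\ alloc h' = alloc h /\ closed h' = closed h /\
      owner h' x = q /\ (forall y, y <> x -> owner h' y = owner h y) /\
      owns h' = owns h /\ fld h' = fld h
  | SetOwns x Sx =>
      alloc h x /\ (forall o, Sx o -> alloc h o) /\
      alloc h' = alloc h /\ closed h' = closed h /\ owner h' = owner h /\
      owns h' x = Sx /\ (forall y, y <> x -> owns h' y = owns h y) /\
      fld h' = fld h
  | SetFld x a v =>
      alloc h x /\ alloc h' = alloc h /\ closed h' = closed h /\
      owner h' = owner h /\ owns h' = owns h /\
      fld h' a x = v /\
      (forall b y, (b <> a \/ y <> x) -> fld h' b y = fld h b y)
  end.

Definition initial_heap (h : heap O A V) : Prop :=
  (forall y, alloc h y <-> y = Void) /\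
  closed h Void = false /\
  owner h Void = Void /\
  (forall o, owns h Void o -> o = Void).

Definition obligations (h : heap O A V) (act : action) (h' : heap O A V) : Prop :=
  match act with
  | Alloc x => closed h' x = false
  | SetOwner x _ => closed h (owner h x) = false
  | SetClosed x false => closed h (owner h x) = false
  | SetClosed x true =>
      forall o, owns h x o -> closed h o = true /\ owner h o = x
  | SetOwns x _ => closed h x = false
  | SetFld x _ _ => closed h x = false
  end.

Definition G2 (h : heap O A V) : Prop :=
  forall o p, alloc h o -> alloc h p ->
    closed h p = true -> owns h p o -> closed h o = true /\ owner h o = p.

End Model.

From Stdlib Require Import Classical.

(* G2 alone is not inductive: allocating a fresh, open object x would break it
   if x already sat in the owns-set of some closed object.  So G2 is
   strengthened by the fact that owns-sets of allocated objects consist of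
   allocated objects, and the conjunction is preserved by every step meeting
   the obligations.  The one interesting case is opening an object x that lies
   in the owns-set of a closed p: G2 would give x.owner = p, whereas obligation
   (b) requires x.owner to be open. *)

Section OwnershipInvariant.

Context {O A V : Type}.

Implicit Types h : heap O A V.

Definition owns_allocated h : Prop :=
  forall p o, alloc h p -> owns h p o -> alloc h o.

Definition ownership_inv h : Prop := G2 h /\ owns_allocated h.

Lemma ownership_inv_initial (Void : O) h :
  initial_heap Void h -> ownership_inv h.
Proof.
  intros [Hal [Hc [_ Hos]]]. split.
  - intros o p _ Ap Cp _. apply Hal in Ap. subst p. congruence.
  - intros p o Ap Op. apply Hal in Ap. subst p. apply Hal, Hos, Op.
Qed.

Lemma ownership_inv_Alloc h h' x :
  ownership_inv h -> step h (Alloc A V x) h' -> closed h' x = false ->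
  ownership_inv h'.
Proof.
  intros [HG HA] [Hfresh [Hal [Hold [_ Hownsx]]]] Cx.
  assert (Hold_alloc : forall y, alloc h y -> alloc h' y /\ y <> x).
  { intros y Ay. split; [apply Hal; now left | congruence]. }
  split.
  - intros o p _ Ap Cp Op.
    destruct (classic (p = x)) as [-> | Hpx]; [congruence |].
    destruct (Hold p Hpx) as [Cp' [_ [Os' _]]].
    assert (Ap0 : alloc h p) by (apply Hal in Ap; destruct Ap; congruence).
    rewrite Cp' in Cp. rewrite Os' in Op.
    destruct (Hold_alloc o (HA p o Ap0 Op)) as [_ Hox].
    destruct (Hold o Hox) as [-> [-> _]]. exact (HG o p (HA p o Ap0 Op) Ap0 Cp Op).
  - intros p o Ap Op.
    destruct (classic (p = x)) as [-> | Hpx]; [exact (Hownsx o Op) |].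
    destruct (Hold p Hpx) as [_ [_ [Os' _]]]. rewrite Os' in Op.
    apply Hal in Ap. destruct Ap as [Ap | Ap]; [| congruence].
    exact (proj1 (Hold_alloc o (HA p o Ap Op))).
Qed.

Lemma ownership_inv_SetClosed h h' x b :
  ownership_inv h -> step h (SetClosed A V x b) h' ->
  obligations h (SetClosed A V x b) h' -> ownership_inv h'.
Proof.
  intros [HG HA] [_ [Hal [Cx [Cy [Hw [Hos _]]]]]] Hobl.
  unfold ownership_inv, G2, owns_allocated in *.
  rewrite Hal, Hw, Hos. split; [| exact HA].
  assert (Hclosed : forall y, closed h' y = true -> y <> x -> closed h y = true)
    by (intros y Cy' Hyx; rewrite <- Cy; assumption).
  intros o p Ao Ap Cp Op.
  destruct b; simpl in Hobl.
  - destruct (classic (p = x)) as [-> | Hpx].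
    + destruct (Hobl o Op) as [Co Oo]. split; [| exact Oo].
      destruct (classic (o = x)) as [-> | Hox]; [congruence | rewrite Cy; auto].
    + destruct (HG o p Ao Ap (Hclosed p Cp Hpx) Op) as [Co Oo]. split; [| exact Oo].
      destruct (classic (o = x)) as [-> | Hox]; [congruence | rewrite Cy; auto].
  - destruct (classic (p = x)) as [-> | Hpx]; [congruence |].
    destruct (HG o p Ao Ap (Hclosed p Cp Hpx) Op) as [Co Oo].
    destruct (classic (o = x)) as [-> | Hox].
    + rewrite Oo, <- Cy in Hobl; congruence.
    + rewrite Cy; auto.
Qed.

Lemma ownership_inv_SetOwner h h' x q :
  ownership_inv h -> step h (SetOwner A V x q) h' ->
  closed h (owner h x) = false -> ownership_inv h'.
Proof.
  intros [HG HA] [_ [_ [Hal [Hc [_ [Wy [Hos _]]]]]]] Hfree.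
  unfold ownership_inv, G2, owns_allocated in *.
  rewrite Hal, Hc, Hos. split; [| exact HA].
  intros o p Ao Ap Cp Op. destruct (HG o p Ao Ap Cp Op) as [Co Oo].
  split; [exact Co |].
  destruct (classic (o = x)) as [-> | Hox]; [congruence | rewrite Wy; auto].
Qed.

Lemma ownership_inv_SetOwns h h' x Sx :
  ownership_inv h -> step h (SetOwns A V x Sx) h' -> closed h x = false ->
  ownership_inv h'.
Proof.
  intros [HG HA] [_ [HSx [Hal [Hc [Hw [Ox [Oy _]]]]]]] Hopen.
  unfold ownership_inv, G2, owns_allocated in *. rewrite Hal, Hc, Hw. split.
  - intros o p Ao Ap Cp Op.
    destruct (classic (p = x)) as [-> | Hpx]; [congruence |].
    rewrite Oy in Op by exact Hpx. auto.
  - intros p o Ap Op.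
    destruct (classic (p = x)) as [-> | Hpx].
    + rewrite Ox in Op. auto.
    + rewrite Oy in Op by exact Hpx. eauto.
Qed.

Lemma ownership_inv_SetFld h h' x a v :
  ownership_inv h -> step h (SetFld x a v) h' -> ownership_inv h'.
Proof.
  intros Hinv [_ [Hal [Hc [Hw [Hos _]]]]].
  unfold ownership_inv, G2, owns_allocated in *. rewrite Hal, Hc, Hw, Hos. exact Hinv.
Qed.

Lemma ownership_inv_step h h' act :
  ownership_inv h -> step h act h' -> obligations h act h' -> ownership_inv h'.
Proof.
  intros Hinv Hs Hobl. destruct act as [x | x b | x q | x Sx | x a v].
  - eapply ownership_inv_Alloc; eassumption.
  - eapply ownership_inv_SetClosed; eassumption.
  - eapply ownership_inv_SetOwner; eassumption.
  - eapply ownership_inv_SetOwns; eassumption.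
  - eapply ownership_inv_SetFld; eassumption.
Qed.

End OwnershipInvariant.

Lemma trace_invariant {T : Type} (P : T -> Prop) (n : nat) (hs : nat -> T) :
  P (hs 0) -> (forall i, i < n -> P (hs i) -> P (hs (S i))) ->
  forall i, i <= n -> P (hs i).
Proof.
  intros H0 HS i. induction i as [| i IH]; intros Hi; [exact H0 |].
  apply HS; [exact Hi |]. apply IH. apply le_S_n, le_S, Hi.
Qed.

Theorem lemma1 (O A V : Type) (Void : O)
  (n : nat) (hs : nat -> heap O A V) (acts : nat -> action O A V) :
  initial_heap Void (hs 0) ->
  (forall i, i < n -> step (hs i) (acts i) (hs (S i))) ->
  (forall i, i < n -> obligations (hs i) (acts i) (hs (S i))) ->
  forall i, i <= n -> G2 (hs i).
Proof.
  intros Hinit Hsteps Hobls i Hi.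
  apply (trace_invariant ownership_inv n hs); [| | exact Hi].
  - eapply ownership_inv_initial, Hinit.
  - intros j Hj Hinv. eapply ownership_inv_step; eauto.
Qed.
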